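(* Let $1/n\ll\gamma\ll\tau\ll\alpha\ll 1$, let $k\in\mathbb{N}$, and let $G$ be a $d$-regular digraph on $n$ vertices with $d\geq\alpha n$. Suppose $\mathcal{P}_k=\{V_{ij}:i,j\in[k]\}$ is an extremal $(k^2,\tau,\gamma)$-partition of $G$. Then for all $i,j\in[k]$ and every $w\in V_{ij}$ we have $d^+_{V_{*i'}}(w)\leq d^+_{V_{*i}}(w)$ and $d^-_{V_{j'*}}(w)\leq d^-_{V_{j*}}(w)$ for all $i',j'\in[k]$. In particular, $d^-_{V_{j'*}}(w),\,d^+_{V_{*i'}}(w)\leq d/2$ for all $i'\neq i$ and $j'\neq j$, and $d^+_{\mathcal{G}_k(\mathcal{P}_k,G)}(v),\,d^-_{\mathcal{G}_k(\mathcal{P}_k,G)}(v)\geq d/k$ for all $v\in V(G)$.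
   Context: Hierarchy convention: $x\ll y$ means $x\leq f(y)$ for some implicitly given non-decreasing function $f:(0,1]\to(0,1]$; the statement asserts such functions exist, constants chosen from right to left. $d$-regular: all in- and outdegrees equal $d$. For $S\subseteq V(G)$, $d^+_S(v)=|N^+(v)\cap S|$ and $d^-_S(v)=|N^-(v)\cap S|$. A $k^2$-partition of $V(G)$ is a family $\{V_{ij}:i,j\in[k]\}$ of pairwise disjoint (possibly empty) sets with union $V(G)$; $V_{i*}=\bigcup_j V_{ij}$, $V_{*j}=\bigcup_i V_{ij}$. $E(A,B)$ is the set of edges $ab$ with $a\in A,b\in B$. Good edges: $\mathcal{G}_k(\mathcal{P}_k,G)=\bigcup_i E(V_{i*},V_{*i})$; bad edges: $\mathcal{B}_k(\mathcal{P}_k,G)=\bigcup_{i\neq j}E(V_{i*},V_{*j})$. $d^{\pm}_{\mathcal{G}_k(\mathcal{P}_k,G)}(v)$ denotes the out/indegree of $v$ in the spanning subdigraph with edge set $\mathcal{G}_k(\mathcal{P}_k,G)$. A $(k^2,\tau,\gamma)$-partition of an $n$-vertex digraph is a $k^2$-partition with $|\mathcal{B}_k(\mathcal{P}_k,G)|\leq\gamma n^2$ and $|V_{i*}|,|V_{*j}|\geq\tau n$ for all $i,j$. It is extremal if $|\mathcal{B}_k(\mathcal{P}_k,G)|\leq|\mathcal{B}_k(\mathcal{P}'_k,G)|$ for every $(k^2,\tau,\gamma)$-partition $\mathcal{P}'_k$ of $V(G)$. *)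

From HB Require Import structures.
From mathcomp Require Import all_boot all_order all_algebra.
Set Implicit Arguments. Unset Strict Implicit. Unset Printing Implicit Defensive.
Import Order.TTheory GRing.Theory Num.Theory.

Definition loopless (V : finType) (E : rel V) : Prop := forall v, ~~ E v v.

Definition outN (V : finType) (E : rel V) (v : V) : {set V} := [set u | E v u].
Definition inN (V : finType) (E : rel V) (v : V) : {set V} := [set u | E u v].

Definition doutS (V : finType) (E : rel V) (S : {set V}) (v : V) : nat :=
  #|outN E v :&: S|.
Definition dinS (V : finType) (E : rel V) (S : {set V}) (v : V) : nat :=
  #|inN E v :&: S|.

Definition regular (V : finType) (E : rel V) (d : nat) : Prop :=
  forall v, #|outN E v| = d /\ #|inN E v| = d.

Definition k2_partition (V : finType) (k : nat) (P : 'I_k -> 'I_k -> {set V}) : Prop :=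
  (forall i j i' j', (i, j) != (i', j') -> [disjoint P i j & P i' j']) /\
  (forall v : V, exists i j, v \in P i j).

Definition Vrow (V : finType) (k : nat) (P : 'I_k -> 'I_k -> {set V}) (i : 'I_k) : {set V} :=
  \bigcup_(j < k) P i j.
Definition Vcol (V : finType) (k : nat) (P : 'I_k -> 'I_k -> {set V}) (j : 'I_k) : {set V} :=
  \bigcup_(i < k) P i j.

Definition bad_edges (V : finType) (E : rel V) (k : nat) (P : 'I_k -> 'I_k -> {set V})
  : {set V * V} :=
  [set e | E e.1 e.2 && [exists i : 'I_k, exists j : 'I_k,
      [&& i != j, e.1 \in Vrow P i & e.2 \in Vcol P j]]].

Definition good_edges (V : finType) (E : rel V) (k : nat) (P : 'I_k -> 'I_k -> {set V})
  : {set V * V} :=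
  [set e | E e.1 e.2 && [exists i : 'I_k, (e.1 \in Vrow P i) && (e.2 \in Vcol P i)]].

Definition dout_good (V : finType) (E : rel V) (k : nat) (P : 'I_k -> 'I_k -> {set V}) (v : V) : nat :=
  #|[set u | (v, u) \in good_edges E P]|.
Definition din_good (V : finType) (E : rel V) (k : nat) (P : 'I_k -> 'I_k -> {set V}) (v : V) : nat :=
  #|[set u | (u, v) \in good_edges E P]|.

Local Open Scope ring_scope.

Definition ktg_partition (R : realFieldType) (V : finType) (E : rel V) (k : nat)
  (tau gamma : R) (P : 'I_k -> 'I_k -> {set V}) : Prop :=
  k2_partition P /\
  (#|bad_edges E P|%:R <= gamma * (#|V|%:R) ^+ 2) /\
  (forall i : 'I_k, tau * #|V|%:R <= #|Vrow P i|%:R /\ tau * #|V|%:R <= #|Vcol P i|%:R).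

Definition extremal_ktg (R : realFieldType) (V : finType) (E : rel V) (k : nat)
  (tau gamma : R) (P : 'I_k -> 'I_k -> {set V}) : Prop :=
  ktg_partition E tau gamma P /\
  (forall P' : 'I_k -> 'I_k -> {set V}, ktg_partition E tau gamma P' ->
     (#|bad_edges E P| <= #|bad_edges E P'|)%N).

(* admissible hierarchy function: non-decreasing (0,1] -> (0,1] *)
Definition hier_fun (R : realFieldType) (f : R -> R) : Prop :=
  (forall x, 0 < x <= 1 -> 0 < f x <= 1) /\
  (forall x y, 0 < x <= 1 -> 0 < y <= 1 -> x <= y -> f x <= f y).

(* Let w lie in V_ij.  Moving w to V_i'j changes only the status of the
   out-edges of w: those into V_{*i'} become good and those into V_{*i} become
   bad, so if d^+_{V_{*i'}}(w) > d^+_{V_{*i}}(w) the number of bad edges drops.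
   Counting the d|V_{*r}| edges entering V_{*r} gives
   |V_{r*}| >= d - gamma n^2 / |V_{*r}| >= (alpha - gamma/tau) n > tau n + 1
   (here tau <= alpha/3, gamma <= tau^2 and 1/n <= gamma suffice), so the
   moved partition is still a (k^2, tau, gamma)-partition, contradicting
   extremality.  The in-degree statements are the same fact for the converse
   digraph and the transposed partition.  Since the d^+_{V_{*r}}(w) sum to d and
   the one at r = i is the largest, the others are at most d/2 and the good
   out-degree d^+_{V_{*i}}(w) is at least d/k. *)

From HB Require Import structures.
From mathcomp Require Import all_boot all_order all_algebra.
From mathcomp Require Import lra.
Import Order.TTheory GRing.Theory Num.Theory.
Set Implicit Arguments. Unset Strict Implicit.

Section Partition.
Variables (V : finType) (k : nat).
Implicit Types (P : 'I_k -> 'I_k -> {set V}) (S : {set V}).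

Lemma k2_partition_cell_uniq P u a b a' b' :
  k2_partition P -> u \in P a b -> u \in P a' b' -> a = a' /\ b = b'.
Proof.
move=> [disjP _] h h'; case: (eqVneq (a, b) (a', b')) => [[-> ->] // | neq].
by rewrite (disjointFr (disjP _ _ _ _ neq) h) in h'.
Qed.

Lemma Vrow_uniq P u a a' :
  k2_partition P -> u \in Vrow P a -> u \in Vrow P a' -> a = a'.
Proof.
by move=> HP /bigcupP[b _ h] /bigcupP[b' _ h']; case: (k2_partition_cell_uniq HP h h').
Qed.

Lemma Vcol_uniq P u b b' :
  k2_partition P -> u \in Vcol P b -> u \in Vcol P b' -> b = b'.
Proof.
by move=> HP /bigcupP[a _ h] /bigcupP[a' _ h']; case: (k2_partition_cell_uniq HP h h').
Qed.

Lemma Vrow_cover P u : k2_partition P -> exists a, u \in Vrow P a.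
Proof. by move=> [_ /(_ u)[a [b h]]]; exists a; apply/bigcupP; exists b. Qed.

Lemma Vcol_cover P u : k2_partition P -> exists b, u \in Vcol P b.
Proof. by move=> [_ /(_ u)[a [b h]]]; exists b; apply/bigcupP; exists a. Qed.

Lemma mem_cell_Vrow P u a b : u \in P a b -> u \in Vrow P a.
Proof. by move=> h; apply/bigcupP; exists b. Qed.

Lemma mem_cell_Vcol P u a b : u \in P a b -> u \in Vcol P b.
Proof. by move=> h; apply/bigcupP; exists a. Qed.

Lemma sum_card_setI_Vcol P S :
  k2_partition P -> \sum_(b < k) #|S :&: Vcol P b| = #|S|.
Proof.
move=> HP; have cardE b : #|S :&: Vcol P b| = \sum_(u in S) (u \in Vcol P b).
  rewrite -sum1_card big_mkcond [RHS]big_mkcond; apply: eq_bigr => u _.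
  by rewrite inE; case: (u \in S).
under eq_bigr => c _ do rewrite cardE.
rewrite exchange_big /= -sum1_card; apply: eq_bigr => u _.
case: (Vcol_cover u HP) => b0 hb0; rewrite (bigD1 b0) //= hb0 big1 ?addn0 // => b neq.
by apply/eqP; rewrite eqb0; apply: contra neq => hb; rewrite (Vcol_uniq HP hb hb0).
Qed.

End Partition.

Section Transpose.
Variables (V : finType) (k : nat).
Implicit Types (P : 'I_k -> 'I_k -> {set V}) (E : rel V).

Definition tr_part P : 'I_k -> 'I_k -> {set V} := fun a b => P b a.

Definition conv E : rel V := fun x y => E y x.

Lemma k2_partition_tr P : k2_partition P -> k2_partition (tr_part P).
Proof.
move=> [disjP covP]; split; last by move=> v; case: (covP v) => a [b h]; exists b, a.
by move=> a b a' b' neq; apply: disjP; apply: contra neq => /eqP[-> ->].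
Qed.

Lemma card_bad_edges_tr E P : #|bad_edges (conv E) (tr_part P)| = #|bad_edges E P|.
Proof.
rewrite -(card_preimset (bad_edges E P) (f := fun e : V * V => (e.2, e.1))); last first.
  by move=> [x y] [x' y'] [-> ->].
apply: eq_card => [[x y]]; rewrite !inE /=; congr (_ && _).
by apply/existsP/existsP => -[a /existsP[b /and3P[neq hx hy]]];
  exists b; apply/existsP; exists a; rewrite eq_sym neq hx hy.
Qed.

Lemma din_good_tr E P v : din_good E P v = dout_good (conv E) (tr_part P) v.
Proof.
apply: eq_card => u; rewrite !inE /=; congr (_ && _).
by apply/existsP/existsP => -[a /andP[h h']]; exists a; rewrite h h'.
Qed.

Lemma regular_conv E d : regular E d -> regular (conv E) d.
Proof. by move=> regE v; case: (regE v). Qed.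

Lemma ktg_partition_tr (R : realFieldType) E (tau gamma : R) P :
  ktg_partition E tau gamma P -> ktg_partition (conv E) tau gamma (tr_part P).
Proof.
move=> [HP [badP sizeP]]; split; first exact: k2_partition_tr.
by split; [rewrite card_bad_edges_tr | move=> a; case: (sizeP a)].
Qed.

Lemma extremal_ktg_tr (R : realFieldType) E (tau gamma : R) P :
  extremal_ktg E tau gamma P -> extremal_ktg (conv E) tau gamma (tr_part P).
Proof.
move=> [ktgP minP]; split; first exact: ktg_partition_tr.
move=> P' /ktg_partition_tr ktgP'.
by rewrite card_bad_edges_tr (card_bad_edges_tr E (tr_part P')); apply: minP.
Qed.

End Transpose.

Section MoveVertex.
Variables (V : finType) (k : nat).
Implicit Types (P : 'I_k -> 'I_k -> {set V}).

Definition move_vertex P (w : V) (a0 b0 : 'I_k) : 'I_k -> 'I_k -> {set V} :=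
  fun a b => [set u | if u == w then (a == a0) && (b == b0) else u \in P a b].

Lemma k2_partition_move P w a0 b0 :
  k2_partition P -> k2_partition (move_vertex P w a0 b0).
Proof.
move=> [disjP covP]; split.
  move=> a b a' b' neq; rewrite disjoints_subset; apply/subsetP => u; rewrite !inE.
  case: eqP => _; last by move=> h; rewrite (disjointFr (disjP _ _ _ _ neq) h).
  move=> /andP[/eqP ea /eqP eb]; apply: contra neq => /andP[/eqP ea' /eqP eb'].
  by rewrite ea eb ea' eb'.
move=> u; case: (eqVneq u w) => [->|neq]; first by exists a0, b0; rewrite inE !eqxx.
by case: (covP u) => a [b h]; exists a, b; rewrite inE (negbTE neq).
Qed.

Lemma Vrow_move P w a0 b0 a u :
  (u \in Vrow (move_vertex P w a0 b0) a) = if u == w then a == a0 else u \in Vrow P a.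
Proof.
case: (eqVneq u w) => [->|neq].
  apply/bigcupP/eqP => [[b _]|->]; first by rewrite inE eqxx => /andP[/eqP].
  by exists b0; rewrite // inE !eqxx.
by apply/bigcupP/bigcupP => -[b _ h]; exists b; move: h; rewrite // inE (negbTE neq).
Qed.

Lemma Vcol_move P w a0 b0 b u :
  (u \in Vcol (move_vertex P w a0 b0) b) = if u == w then b == b0 else u \in Vcol P b.
Proof.
case: (eqVneq u w) => [->|neq].
  apply/bigcupP/eqP => [[a _]|->]; first by rewrite inE eqxx => /andP[_ /eqP].
  by exists a0; rewrite // inE !eqxx.
by apply/bigcupP/bigcupP => -[a _ h]; exists a; move: h; rewrite // inE (negbTE neq).
Qed.

Lemma Vcol_move_within_col P w a b a' :
  k2_partition P -> w \in P a b -> Vcol (move_vertex P w a' b) =1 Vcol P.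
Proof.
move=> HP hw c; apply/setP => u; rewrite Vcol_move; case: (eqVneq u w) => [->|//].
have hwb := mem_cell_Vcol hw.
by apply/eqP/idP => [->|hwc] //; apply: (Vcol_uniq HP hwc hwb).
Qed.

End MoveVertex.

Section Edges.
Variables (V : finType) (E : rel V) (k : nat).
Implicit Types (P : 'I_k -> 'I_k -> {set V}).

Lemma bad_edgesE P x y r c :
  k2_partition P -> x \in Vrow P r -> y \in Vcol P c ->
  ((x, y) \in bad_edges E P) = E x y && (r != c).
Proof.
move=> HP hx hy; rewrite inE /=; congr (_ && _).
apply/existsP/idP => [[a /existsP[b /and3P[neq hxa hyb]]]|neq].
  by rewrite (Vrow_uniq HP hx hxa) (Vcol_uniq HP hy hyb).
by exists r; apply/existsP; exists c; rewrite neq hx hy.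
Qed.

Lemma dout_good_Vrow P v r :
  k2_partition P -> v \in Vrow P r -> dout_good E P v = doutS E (Vcol P r) v.
Proof.
move=> HP hv; apply: eq_card => u; rewrite !inE /=; congr (_ && _).
apply/existsP/idP => [[a /andP[hva hua]]|hu]; first by rewrite (Vrow_uniq HP hv hva).
by exists r; rewrite hv hu.
Qed.

Definition edges_from (w : V) : {set V * V} := [set e | e.1 == w].

Lemma card_bad_edges_from P w a :
  k2_partition P -> w \in Vrow P a ->
  #|bad_edges E P :&: edges_from w| + doutS E (Vcol P a) w = #|outN E w|.
Proof.
move=> HP hw.
have -> : bad_edges E P :&: edges_from w = [set (w, y) | y in outN E w :\: Vcol P a].
  apply/setP => -[x y]; rewrite in_setI [in X in _ && X]inE /=.
  case: (eqVneq x w) => [->|neq]; last first.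
    by rewrite andbF; apply/esym/imsetP => -[y' _ [ex _]]; rewrite ex eqxx in neq.
  case: (Vcol_cover y HP) => c hc; rewrite andbT (bad_edgesE HP hw hc).
  apply/idP/imsetP => [/andP[wy neq]|[y' hy' [eyy]]].
    exists y => //; rewrite !inE wy andbT.
    by apply: contra neq => hya; rewrite (Vcol_uniq HP hya hc).
  move: hy'; rewrite -eyy !inE => /andP[hya ->].
  by apply: contraNneq hya => ->.
by rewrite card_imset => [|y y' [//]]; rewrite addnC cardsID.
Qed.

Lemma bad_edges_move_off P w a b a' :
  k2_partition P -> w \in P a b ->
  bad_edges E (move_vertex P w a' b) :\: edges_from w = bad_edges E P :\: edges_from w.
Proof.
move=> HP hw; have HP' := k2_partition_move w a' b HP.
apply/setP => -[x y]; rewrite !in_setD [in X in ~~ X]inE /=.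
case: (eqVneq x w) => [//|neq] /=.
case: (Vrow_cover x HP) => r hr; case: (Vcol_cover y HP) => c hc.
have hr' : x \in Vrow (move_vertex P w a' b) r by rewrite Vrow_move (negbTE neq).
have hc' : y \in Vcol (move_vertex P w a' b) c by rewrite (Vcol_move_within_col _ HP hw).
by rewrite (bad_edgesE HP hr hc) (bad_edgesE HP' hr' hc').
Qed.

Lemma card_bad_edges_move P w a b a' :
  k2_partition P -> w \in P a b ->
  #|bad_edges E (move_vertex P w a' b)| + doutS E (Vcol P a') w =
  #|bad_edges E P| + doutS E (Vcol P a) w.
Proof.
move=> HP hw; set P' := move_vertex P w a' b.
have HP' : k2_partition P' := k2_partition_move w a' b HP.
have hwP' : w \in Vrow P' a' by rewrite Vrow_move eqxx.
rewrite -(cardsID (edges_from w) (bad_edges E P)).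
rewrite -(cardsID (edges_from w) (bad_edges E P')) (bad_edges_move_off _ HP hw).
rewrite addnAC [in RHS]addnAC; congr (_ + _).
rewrite (card_bad_edges_from HP (mem_cell_Vrow hw)) -(card_bad_edges_from HP' hwP').
by rewrite (Vcol_move_within_col _ HP hw).
Qed.

Lemma card_edges_into (C : {set V}) d :
  regular E d -> #|[set e : V * V | E e.1 e.2 && (e.2 \in C)]| = d * #|C|.
Proof.
move=> regE.
have -> : #|[set e : V * V | E e.1 e.2 && (e.2 \in C)]| =
          \sum_x \sum_y (E x y && (y \in C) : nat).
  rewrite pair_big /= -sum1_card big_mkcond /=.
  by apply: eq_bigr => -[x y] _; rewrite inE.
rewrite exchange_big mulnC -sum_nat_const [RHS]big_mkcond; apply: eq_bigr => y _.
case: (boolP (y \in C)) => hy; last by rewrite big1 // => x _; rewrite andbF.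
case: (regE y) => _ <-; rewrite -sum1_card [RHS]big_mkcond.
by apply: eq_bigr => x _; rewrite andbT inE.
Qed.

Lemma regular_Vcol_bound P d a :
  k2_partition P -> regular E d ->
  d * #|Vcol P a| <= #|Vrow P a| * #|Vcol P a| + #|bad_edges E P|.
Proof.
move=> HP regE; rewrite -(card_edges_into _ regE) -cardsX.
apply: leq_trans (leq_card_setU _ _); apply: subset_leq_card.
apply/subsetP => -[x y]; rewrite inE /= => /andP[xy hy]; rewrite in_setU in_setX /=.
case: (Vrow_cover x HP) => r hx; case: (eqVneq r a) => [ra|neq].
  by subst r; rewrite hx hy.
by rewrite (bad_edgesE HP hx hy) xy neq orbT.
Qed.

End Edges.

Local Open Scope ring_scope.

Lemma density_lower_bound (R : realFieldType) (alpha tau gamma N D C B r : R) :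
  0 < tau <= 1 -> 3 * tau <= alpha -> gamma <= tau ^+ 2 -> 0 <= N -> 1 <= gamma * N ->
  alpha * N <= D -> tau * N <= C -> D * C <= r * C + B -> B <= gamma * N ^+ 2 ->
  tau * N + 1 <= r.
Proof.
move=> /andP[tau_gt0 tau_le1] tau_alpha gamma_tau N_ge0 gammaN alphaD tauC DC BN.
have gamma_le_tau : gamma <= tau by apply: le_trans gamma_tau _; rewrite expr2; nra.
have tauN_ge1 : 1 <= tau * N by nra.
have C_gt0 : 0 < C by lra.
have B_le : B <= tau * N * C.
  have : gamma * N ^+ 2 <= tau ^+ 2 * N ^+ 2 by apply: ler_wpM2r; rewrite ?sqr_ge0.
  have : tau * N * (tau * N) <= tau * N * C by apply: ler_wpM2l; lra.
  rewrite !expr2; lra.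
have alphaDC : alpha * N * C <= D * C by apply: ler_wpM2r; lra.
have NC_ge0 : 0 <= N * C by nra.
have tau_alphaC : 3 * tau * N * C <= alpha * N * C by rewrite -!mulrA; nra.
have rC : 2 * tau * N * C <= r * C by lra.
have : 2 * tau * N <= r by rewrite -(ler_pM2r C_gt0).
lra.
Qed.

Section Extremal.
Variables (R : realFieldType) (V : finType) (E : rel V) (k : nat) (tau gamma : R).
Implicit Types (P : 'I_k -> 'I_k -> {set V}).

Lemma ktg_Vrow_large (alpha : R) d P :
  0 < tau <= 1 -> 3 * tau <= alpha -> gamma <= tau ^+ 2 -> #|V|%:R^-1 <= gamma ->
  (0 < #|V|)%N -> regular E d -> alpha * #|V|%:R <= d%:R ->
  ktg_partition E tau gamma P -> forall r, tau * #|V|%:R + 1 <= #|Vrow P r|%:R.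
Proof.
move=> tau01 tau_alpha gamma_tau invV_gamma V_gt0 regE alpha_d [HP [badP sizeP]] r.
have gammaV : 1 <= gamma * #|V|%:R.
  have V_neq0 : #|V|%:R != 0 :> R by rewrite pnatr_eq0 -lt0n.
  by have := ler_wpM2r (ler0n R #|V|) invV_gamma; rewrite mulVf.
have [_ colP] := sizeP r.
apply: (density_lower_bound tau01 tau_alpha gamma_tau _ gammaV alpha_d colP _ badP) => //.
by rewrite -!natrM -natrD ler_nat; apply: regular_Vcol_bound.
Qed.

Lemma ktg_partition_move P w a b a' :
  ktg_partition E tau gamma P -> (forall r, tau * #|V|%:R + 1 <= #|Vrow P r|%:R) ->
  w \in P a b -> (#|bad_edges E (move_vertex P w a' b)| <= #|bad_edges E P|)%N ->
  ktg_partition E tau gamma (move_vertex P w a' b).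
Proof.
move=> [HP [badP sizeP]] slackP hw bad_le; split; first exact: k2_partition_move.
split=> [|r]; first by apply: le_trans badP; rewrite ler_nat.
rewrite (Vcol_move_within_col a' HP hw r).
split; last by case: (sizeP r).
suff : (#|Vrow P r| <= #|Vrow (move_vertex P w a' b) r| + 1)%N
  by rewrite -(ler_nat R) natrD; have := slackP r; lra.
rewrite (cardsD1 w) addnC leq_add ?leq_b1 //; apply/subset_leq_card/subsetP => u.
by rewrite !inE Vrow_move => /andP[/negPf->].
Qed.

Lemma extremal_doutS_le P w a b a' :
  extremal_ktg E tau gamma P -> (forall r, tau * #|V|%:R + 1 <= #|Vrow P r|%:R) ->
  w \in P a b -> (doutS E (Vcol P a') w <= doutS E (Vcol P a) w)%N.
Proof.
move=> [ktgP minP] slackP hw; rewrite leqNgt; apply/negP => more_out.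
have bad_lt : (#|bad_edges E (move_vertex P w a' b)| < #|bad_edges E P|)%N.
  by rewrite -(ltn_add2r (doutS E (Vcol P a') w)) (card_bad_edges_move E a' ktgP.1 hw) ltn_add2l.
have := minP _ (ktg_partition_move ktgP slackP hw (ltnW bad_lt)).
by rewrite leqNgt bad_lt.
Qed.

End Extremal.

Lemma dominant_doutS_bounds (R : realFieldType) (V : finType) (E : rel V) (k d : nat)
    (P : 'I_k -> 'I_k -> {set V}) a w :
  k2_partition P -> regular E d -> w \in Vrow P a ->
  (forall a', doutS E (Vcol P a') w <= doutS E (Vcol P a) w)%N ->
  (forall a', a' != a -> (doutS E (Vcol P a') w)%:R <= d%:R / 2 :> R) /\
  d%:R / k%:R <= (dout_good E P w)%:R :> R.
Proof.
move=> HP regE hw dom.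
have sum_d : (\sum_b doutS E (Vcol P b) w)%N = d.
  by rewrite (sum_card_setI_Vcol _ HP); case: (regE w).
split=> [a' neq|].
  rewrite ler_pdivlMr // -natrM ler_nat -sum_d (bigD1 a) // (bigD1 a') //=.
  by rewrite muln2 -addnn leq_add ?dom ?leq_addr.
rewrite (dout_good_Vrow _ HP hw); have [k0|k_gt0] := posnP k.
  by rewrite (_ : k%:R = 0) ?invr0 ?mulr0 // k0.
rewrite ler_pdivrMr ?ltr0n // -natrM ler_nat -sum_d mulnC.
by rewrite -[X in (X * _)%N]card_ord -sum_nat_const leq_sum.
Qed.

Lemma hier_fun_div3 (R : realFieldType) : hier_fun (fun x : R => x / 3).
Proof.
split=> [x /andP[x_gt0 x_le1]|x y _ _ le_xy]; last lra.
by apply/andP; split; lra.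
Qed.

Lemma hier_fun_sqr (R : realFieldType) : hier_fun (fun x : R => x ^+ 2).
Proof.
split=> [x /andP[x_gt0 x_le1]|x y /andP[x_gt0 _] _ le_xy]; rewrite !expr2; last nra.
by apply/andP; split; nra.
Qed.

Theorem proposition3p10 (R : realFieldType) :
  exists (f0 : R -> R) (f1 : R -> R) (f2 : R -> R) (f3 : R -> R),
    [/\ hier_fun f0, hier_fun f1, hier_fun f2 & hier_fun f3] /\
  forall (alpha tau gamma : R) (n k d : nat) (V : finType) (E : rel V)
         (P : 'I_k -> 'I_k -> {set V}),
    0 < alpha <= 1 -> 0 < tau <= 1 -> 0 < gamma <= 1 -> (0 < n)%N ->
    alpha <= f0 1 -> tau <= f1 alpha -> gamma <= f2 tau -> n%:R^-1 <= f3 gamma ->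
    #|V| = n -> loopless E -> regular E d -> alpha * n%:R <= d%:R ->
    extremal_ktg E tau gamma P ->
    (forall (i j : 'I_k) (w : V), w \in P i j ->
       (forall i' : 'I_k, (doutS E (Vcol P i') w <= doutS E (Vcol P i) w)%N) /\
       (forall j' : 'I_k, (dinS E (Vrow P j') w <= dinS E (Vrow P j) w)%N) /\
       (forall i' : 'I_k, i' != i -> (doutS E (Vcol P i') w)%:R <= d%:R / 2 :> R) /\
       (forall j' : 'I_k, j' != j -> (dinS E (Vrow P j') w)%:R <= d%:R / 2 :> R)) /\
    (forall v : V, d%:R / k%:R <= (dout_good E P v)%:R :> R /\
                   d%:R / k%:R <= (din_good E P v)%:R :> R).
Proof.
exists (fun x => x), (fun x => x / 3), (fun x => x ^+ 2), (fun x => x).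
split; first by split; [by [] | exact: hier_fun_div3 | exact: hier_fun_sqr | by []].
move=> alpha tau gamma n k d V E P _ tau01 _ n_gt0 _ tau_alpha gamma_tau invn_gamma
  cardV _ regE alpha_d extP; subst n.
have tau_alpha3 : 3 * tau <= alpha by lra.
have extPT := extremal_ktg_tr extP; have regET := regular_conv regE.
have slack := ktg_Vrow_large tau01 tau_alpha3 gamma_tau invn_gamma n_gt0 regE alpha_d extP.1.
have slackT := ktg_Vrow_large tau01 tau_alpha3 gamma_tau invn_gamma n_gt0 regET alpha_d extPT.1.
have out_dom a b w (hw : w \in P a b) a' := extremal_doutS_le a' extP slack hw.
have in_dom a b w (hw : w \in P a b) b' :=
  extremal_doutS_le b' extPT slackT (hw : w \in tr_part P b a).
have HP := extP.1.1; have HPT := k2_partition_tr HP.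
have out_bounds a b w (hw : w \in P a b) :=
  dominant_doutS_bounds R HP regE (mem_cell_Vrow hw) (out_dom a b w hw).
have in_bounds a b w (hw : w \in P a b) :=
  dominant_doutS_bounds R HPT regET (mem_cell_Vcol hw) (in_dom a b w hw).
split=> [a b w hw | v].
  have [[out_half _] [in_half _]] := (out_bounds a b w hw, in_bounds a b w hw).
  by split; [exact: out_dom hw | split; [exact: in_dom hw | split]].
have [a [b hv]] := HP.2 v; rewrite din_good_tr.
by have [[_ ->] [_ ->]] := (out_bounds a b v hv, in_bounds a b v hv).
Qed.
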